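(* Let $X,Y,P$ be Banach spaces, $H:X\times P\rightrightarrows Y$ a set-valued map and $(\overline{x},\overline{p},0)\in\operatorname{Gr}H$. Define $S:P\rightrightarrows X$ by $S(p)=\{x\in X: 0\in H(x,p)\}$, and suppose $H$ is inner semicontinuous at $((\overline{x},\overline{p}),0)$. (i) If $H$ is open with linear rate $c>0$ with respect to $x$ uniformly in $p$ around $((\overline{x},\overline{p}),0)$, then there exist $\overline{r},\overline{t}>0$ such that for every $(x,p)\in B(\overline{x},\overline{r})\times B(\overline{p},\overline{t})$, \[ d(x,S(p))\le c^{-1}d(0,H(x,p)). \] If moreover $H$ is Lipschitz-like with respect to $p$ uniformly in $x$ around $((\overline{x},\overline{p}),0)$, then $S$ is Lipschitz-like around $(\overline{p},\overline{x})$ and \[ \operatorname{lip}S(\overline{p},\overline{x})\le c^{-1}\,\widehat{\operatorname{lip}}_pH((\overline{x},\overline{p}),0). \] (ii) If $H$ is open with linear rate $c>0$ with respect to $p$ uniformly in $x$ around $((\overline{x},\overline{p}),0)$, then there exist $\overline{r},\overline{t}>0$ such that for every $(x,p)\in B(\overline{x},\overline{r})\times B(\overline{p},\overline{t})$, \[ d(p,S^{-1}(x))\le c^{-1}d(0,H(x,p)). \] If moreover $H$ is Lipschitz-like with respect to $x$ uniformly in $p$ around $((\overline{x},\overline{p}),0)$, then $S$ is metrically regular around $(\overline{p},\overline{x})$ and \[ \operatorname{reg}S(\overline{p},\overline{x})\le c^{-1}\,\widehat{\operatorname{lip}}_xH((\overline{x},\overline{p}),0). \]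
   Context: $B(x,r)$ open ball, $\mathbb{D}_Y$ closed unit ball of $Y$, $d(x,A)=\inf_{a\in A}\|x-a\|$ with $d(x,\emptyset)=\infty$. Product spaces carry the sum norm. $H$ is inner semicontinuous at $((\overline{x},\overline{p}),0)$ if for every open $D\ni 0$ there is a neighborhood $U$ of $(\overline{x},\overline{p})$ with $H(x,p)\cap D\neq\emptyset$ for all $(x,p)\in U$. Write $H_p=H(\cdot,p)$, $H_x=H(x,\cdot)$. $H$ is open with linear rate $c$ with respect to $x$ uniformly in $p$ around $((\overline{x},\overline{p}),\overline{y})$ if there exist $\varepsilon>0$ and neighborhoods $U$ of $\overline{x}$, $V$ of $\overline{p}$, $W$ of $\overline{y}$ such that for every $\rho\in]0,\varepsilon[$, $p\in V$ and $(x,y)\in\operatorname{Gr}H_p\cap(U\times W)$: $B(y,\rho c)\subset H_p(B(x,\rho))$. $H$ is Lipschitz-like with respect to $x$ uniformly in $p$ around $((\overline{x},\overline{p}),\overline{y})$ with constant $L$ if there are such neighborhoods with $H_p(x)\cap W\subset H_p(u)+L\|x-u\|\mathbb{D}_Y$ for all $x,u\in U$, $p\in V$; $\widehat{\operatorname{lip}}_xH((\overline{x},\overline{p}),\overline{y})$ is the infimum of such $L$. The notions ''with respect to $p$ uniformly in $x$'' (and $\widehat{\operatorname{lip}}_p$) are defined symmetrically, exchanging the roles of $x$ and $p$. A multifunction $T:A\rightrightarrows B$ is Lipschitz-like around $(\overline{a},\overline{b})\in\operatorname{Gr}T$ with constant $L$ if there are neighborhoods $U$ of $\overline{a}$, $V$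 of $\overline{b}$ with $T(a)\cap V\subset T(u)+L\|a-u\|\mathbb{D}_B$ for all $a,u\in U$; $\operatorname{lip}T(\overline{a},\overline{b})$ is the infimum of such $L$. $T$ is metrically regular around $(\overline{a},\overline{b})$ with constant $L$ if there are neighborhoods $U,V$ with $d(a,T^{-1}(b))\le L\,d(b,T(a))$ for all $(a,b)\in U\times V$; $\operatorname{reg}T(\overline{a},\overline{b})$ is the infimum of such $L$. *)

From HB Require Import structures.
From mathcomp Require Import all_boot all_order all_algebra.
From mathcomp Require Import all_classical all_reals all_analysis.
Set Implicit Arguments. Unset Strict Implicit. Unset Printing Implicit Defensive.
Import Order.TTheory GRing.Theory Num.Theory.
Import numFieldNormedType.Exports.
Local Open Scope classical_set_scope.
Local Open Scope ring_scope.

Section Defs.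
Variable R : realType.

Definition mf_ball (V : normedModType R) (x : V) (r : R) : set V :=
  [set y | `|x - y| < r].

(* d(x,A) = inf_{a in A} ||x - a||, with d(x, emptyset) = +oo *)
Definition mf_dist (V : normedModType R) (x : V) (A : set V) : \bar R :=
  ereal_inf [set (`|x - a|)%:E | a in A].

Variables (X Y P : normedModType R).

Definition inner_semicont (H : X -> P -> set Y) (xb : X) (pb : P) (yb : Y) :=
  forall D : set Y, open D -> D yb ->
    exists U : set (X * P), nbhs (xb, pb) U /\
      forall x p, U (x, p) -> H x p `&` D !=set0.

Definition open_rate_x (H : X -> P -> set Y) (xb : X) (pb : P) (yb : Y) (c : R) :=
  exists eps : R, 0 < eps /\
  exists U V W, nbhs xb U /\ nbhs pb V /\ nbhs yb W /\
    forall rho p x y, 0 < rho -> rho < eps -> V p -> U x -> W y -> H x p y ->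
      mf_ball y (rho * c) `<=` [set y' | exists2 x', mf_ball x rho x' & H x' p y'].

Definition open_rate_p (H : X -> P -> set Y) (xb : X) (pb : P) (yb : Y) (c : R) :=
  exists eps : R, 0 < eps /\
  exists U V W, nbhs xb U /\ nbhs pb V /\ nbhs yb W /\
    forall rho x p y, 0 < rho -> rho < eps -> U x -> V p -> W y -> H x p y ->
      mf_ball y (rho * c) `<=` [set y' | exists2 p', mf_ball p rho p' & H x p' y'].

Definition liplike_x (H : X -> P -> set Y) (xb : X) (pb : P) (yb : Y) (L : R) :=
  0 <= L /\
  exists U V W, nbhs xb U /\ nbhs pb V /\ nbhs yb W /\
    forall x u p, U x -> U u -> V p ->
      forall y, H x p y -> W y ->
        exists2 y', H u p y' & `|y - y'| <= L * `|x - u|.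

Definition liplike_p (H : X -> P -> set Y) (xb : X) (pb : P) (yb : Y) (L : R) :=
  0 <= L /\
  exists U V W, nbhs xb U /\ nbhs pb V /\ nbhs yb W /\
    forall p q x, V p -> V q -> U x ->
      forall y, H x p y -> W y ->
        exists2 y', H x q y' & `|y - y'| <= L * `|p - q|.

Definition lip_hat_x H xb pb yb : \bar R :=
  ereal_inf [set L%:E | L in liplike_x H xb pb yb].
Definition lip_hat_p H xb pb yb : \bar R :=
  ereal_inf [set L%:E | L in liplike_p H xb pb yb].

End Defs.

Section Single.
Variable R : realType.
Variables (A B : normedModType R).

Definition liplike (T : A -> set B) (ab : A) (bb : B) (L : R) :=
  0 <= L /\
  exists U V, nbhs ab U /\ nbhs bb V /\
    forall a u, U a -> U u -> forall b, T a b -> V b ->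
      exists2 b', T u b' & `|b - b'| <= L * `|a - u|.

Definition lip (T : A -> set B) ab bb : \bar R :=
  ereal_inf [set L%:E | L in liplike T ab bb].

Definition inv_mf (T : A -> set B) : B -> set A := fun b => [set a | T a b].

Definition metreg (T : A -> set B) (ab : A) (bb : B) (L : R) :=
  0 <= L /\
  exists U V, nbhs ab U /\ nbhs bb V /\
    forall a b, U a -> V b ->
      (mf_dist a (inv_mf T b) <= L%:E * mf_dist b (T a))%E.

Definition reg (T : A -> set B) ab bb : \bar R :=
  ereal_inf [set L%:E | L in metreg T ab bb].

End Single.

Definition solmap (R : realType) (X Y P : normedModType R) (H : X -> P -> set Y)
  : P -> set X := fun p => [set x | H x p 0].

From HB Require Import structures.
From mathcomp Require Import all_boot all_order all_algebra.
From mathcomp Require Import all_classical all_reals all_analysis.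
From mathcomp Require Import lra.
Import Order.TTheory GRing.Theory Num.Theory.
Import numFieldNormedType.Exports.
Local Open Scope classical_set_scope.
Local Open Scope ring_scope.
Set Implicit Arguments. Unset Strict Implicit.

(* Openness of [H] in [x] at rate [c] moves a value [y] of [H(x, p)] to [0] at
   cost [|y| / c] in [x], and inner semicontinuity supplies small values near the
   reference point: hence [d(x, S p) <= c^-1 d(0, H(x, p))].  A zero of [H(x, p)]
   gives, by the Lipschitz-like property in [p], a value of norm [<= L |p - q|]
   in [H(x, q)], so [d(x, S q) <= (L / c) |p - q|]: [S] is Lipschitz-like with
   any constant above [L / c].  Part (ii) is the same argument with [x] and [p]
   exchanged; there the Lipschitz-like property in [x] bounds [d(0, H(x, p))]
   by [L d(x, S p)], which turns the estimate for [S^-1] into metric regularity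
   of [S]. *)

Section Preliminaries.
Variable R : realType.

Lemma le_pmul_ereal_inf (x : \bar R) (k : R) (E : set \bar R) :
  0 < k -> (forall z, E z -> (x <= k%:E * z)%E) -> (x <= k%:E * ereal_inf E)%E.
Proof.
move=> k_gt0 xE; rewrite -ereal_inf_pZl //.
by apply/ereal_infP => _ [z Ez <-]; exact: xE.
Qed.

Lemma lee_gt_bounded (x : \bar R) (u v : R) :
  u < v -> (forall w, u < w -> w < v -> (x <= w%:E)%E) -> (x <= u%:E)%E.
Proof.
move=> uv xw; apply/lee_addgt0Pr => e e_gt0.
set m := Order.min e ((v - u) / 2).
have m_gt0 : 0 < m by rewrite lt_min e_gt0 divr_gt0 // subr_gt0.
have m_le : m <= (v - u) / 2 by rewrite ge_min lexx orbT.
apply: le_trans (xw (u + m) _ _) _; first by rewrite ltrDl.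
  lra.
by rewrite -EFinD lee_fin lerD2l ge_min lexx.
Qed.

Lemma mf_dist_le_norm (V : normedModType R) (x x' : V) (S : set V) :
  S x' -> (mf_dist x S <= (`|x - x'|)%:E)%E.
Proof. by move=> Sx'; apply: ge_ereal_inf; exists (`|x - x'|)%:E => //; exists x'. Qed.

Lemma nbhs_norm_lt (V : normedModType R) (x : V) (r : R) :
  0 < r -> nbhs x [set y | `|x - y| < r].
Proof. by move=> r_gt0; rewrite -nbhs_nbhs_norm; exists r. Qed.

Lemma near_norm_ball (V : normedModType R) (x : V) (U : set V) :
  nbhs x U -> \forall r \near 0^'+, forall y, `|x - y| < r -> U y.
Proof.
rewrite -nbhs_nbhs_norm => -[e e_gt0 eU]; near=> r => y xy; apply: eU.
by apply: lt_le_trans xy _; near: r; apply: nbhs_right_le.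
Unshelve. all: by end_near. Qed.

Lemma le_ereal_inf_EFin_scale (Q Q' : R -> Prop) (c : R) : 0 < c ->
  (forall L, Q L -> forall L' : R, L / c < L' -> Q' L') ->
  (ereal_inf [set L%:E | L in Q'] <= c^-1%:E * ereal_inf [set L%:E | L in Q])%E.
Proof.
move=> c_gt0 QQ'; apply: le_pmul_ereal_inf; first by rewrite invr_gt0.
move=> _ [L QL <-]; rewrite -EFinM; apply/lee_addgt0Pr => e e_gt0.
apply: ge_ereal_inf; exists (c^-1 * L + e)%:E; last by rewrite EFinD.
by exists (c^-1 * L + e) => //; apply: (QQ' L QL); rewrite mulrC ltrDl.
Qed.

End Preliminaries.

(* Ball versions of the hypotheses of the theorem, for a map [G a b] in which [a]
   is the variable solved for and [b] the parameter; a single radius [r] serves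
   for the neighbourhoods of [ab], [bb] and of the value [0]. *)
Section BallConditions.
Variables (R : realType) (A B Y : normedModType R).

Definition open_rate_ball (G : A -> B -> set Y) (ab : A) (bb : B) (c eps r : R) :=
  forall rho a b y, 0 < rho -> rho < eps ->
    `|ab - a| < r -> `|bb - b| < r -> `|y| < r -> G a b y ->
    forall y', `|y - y'| < rho * c -> exists2 a', `|a - a'| < rho & G a' b y'.

Definition inner_ball (G : A -> B -> set Y) (ab : A) (bb : B) :=
  forall d : R, 0 < d -> exists2 r : R, 0 < r &
    forall a b, `|ab - a| < r -> `|bb - b| < r -> exists2 y, G a b y & `|y| < d.

Definition liplike_ball (G : A -> B -> set Y) (ab : A) (bb : B) (L r : R) :=
  forall b b' a, `|bb - b| < r -> `|bb - b'| < r -> `|ab - a| < r ->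
    forall y, G a b y -> `|y| < r ->
    exists2 y', G a b' y' & `|y - y'| <= L * `|b - b'|.

End BallConditions.

Lemma inner_ball_swap (R : realType) (A B Y : normedModType R)
    (G : A -> B -> set Y) ab bb :
  inner_ball G ab bb -> inner_ball (fun b a => G a b) bb ab.
Proof.
move=> innerG d d_gt0; have [r r_gt0 Gd] := innerG d d_gt0.
by exists r => // b a bb_b ab_a; exact: Gd.
Qed.

(* Part (i) is the case [G := H], part (ii) the case [G := fun p x => H x p];
   for the latter, [inv_mf (solmap G)] is [solmap H]. *)
Section SolutionMap.
Variables (R : realType) (A B Y : normedModType R) (G : A -> B -> set Y).
Variables (ab : A) (bb : B) (L rl : R).
Hypotheses (L_ge0 : 0 <= L) (rl_gt0 : 0 < rl).
Hypotheses (lipG : liplike_ball G ab bb L rl) (innerG : inner_ball G ab bb).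

Lemma dist0_le_param_dist K : L < K -> exists2 s : R, 0 < s & forall a b b',
  `|ab - a| < s -> `|bb - b| < s -> G a b' 0 ->
  (mf_dist (0%R : Y) (G a b) <= (K * `|b - b'|)%:E)%E.
Proof.
move=> L_K; have K_gt0 : 0 < K by apply: le_lt_trans L_K.
have Krl_gt0 : 0 < K * (rl / 2) by rewrite mulr_gt0 // divr_gt0.
have [s s_gt0 small_value] := innerG Krl_gt0.
exists (Order.min (rl / 2) s); first by rewrite lt_min s_gt0 divr_gt0.
move=> a b b'; rewrite !lt_min => /andP[ab_rl ab_s] /andP[bb_rl bb_s] Gb'.
have rl2_rl : rl / 2 < rl by rewrite ltr_pdivrMr // ltr_pMr // ltr1n.
(* Near [bb] use the Lipschitz property from [b'] to [b]; far from it, [|b - b'|]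
   is at least [rl / 2] and inner semicontinuity bounds the residual. *)
have [bb'_rl|rl_bb'] := ltP `|bb - b'| rl.
  have [|y Gy y_le] := lipG bb'_rl (lt_trans bb_rl rl2_rl) (lt_trans ab_rl rl2_rl) Gb'.
    by rewrite normr0.
  apply: le_trans (mf_dist_le_norm 0 Gy) _; rewrite lee_fin.
  by apply: le_trans y_le _; rewrite distrC ler_wpM2r // ltW.
have [y Gy y_small] := small_value _ _ ab_s bb_s.
apply: le_trans (mf_dist_le_norm 0 Gy) _; rewrite lee_fin sub0r normrN.
have rl2_bb' : rl / 2 <= `|b - b'| by have := ler_distD b bb b'; lra.
by apply: ltW (lt_le_trans y_small _); rewrite ler_wpM2l // ltW.
Qed.

Variables (c eps r : R).
Hypotheses (c_gt0 : 0 < c) (eps_gt0 : 0 < eps) (r_gt0 : 0 < r).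
Hypothesis openG : open_rate_ball G ab bb c eps r.

(* Taking [y' := 0] in the openness with [rho] just above [|y| / c]. *)
Lemma dist_solmap_le_norm a b y :
  `|ab - a| < r -> `|bb - b| < r -> `|y| < r -> `|y| < c * eps -> G a b y ->
  (mf_dist a (solmap G b) <= (c^-1 * `|y|)%:E)%E.
Proof.
move=> ab_a bb_b y_r y_ceps Gy.
have y_eps : c^-1 * `|y| < eps by rewrite ltr_pdivrMl.
apply: (lee_gt_bounded y_eps) => rho y_rho rho_eps.
have rho_gt0 : 0 < rho by apply: le_lt_trans y_rho; rewrite mulr_ge0 // invr_ge0 ltW.
have [|a' aa' Ga'] := openG rho_gt0 rho_eps ab_a bb_b y_r Gy (y' := 0).
  by rewrite subr0 mulrC -ltr_pdivrMl.
by apply: le_trans (mf_dist_le_norm a Ga') _; rewrite lee_fin ltW.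
Qed.

Lemma dist_solmap_le_param : exists2 t : R, 0 < t & forall a b b',
  `|ab - a| < t -> `|bb - b| < t -> `|bb - b'| < t -> G a b 0 ->
  (mf_dist a (solmap G b') <= (c^-1 * (L * `|b - b'|))%:E)%E.
Proof.
set d := Order.min r (c * eps).
have d_gt0 : 0 < d by rewrite lt_min r_gt0 mulr_gt0.
have L2_gt0 : 0 < 2 * (L + 1) by rewrite mulr_gt0 // ltr_wpDl.
set t' := d / (2 * (L + 1)).
have t'_gt0 : 0 < t' by rewrite divr_gt0.
have t'_d : t' * (2 * (L + 1)) = d by rewrite divfK // gt_eqF.
exists (Order.min (Order.min r rl) t'); first by rewrite !lt_min r_gt0 rl_gt0 t'_gt0.
move=> a b b'; rewrite !lt_min => /andP[/andP[ab_r ab_rl] _].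
move=> /andP[/andP[_ bb_rl] bb_t'] /andP[/andP[bb'_r bb'_rl] bb'_t'] Ga.
have [|y' Gy' y'_le] := lipG bb_rl bb'_rl ab_rl Ga; first by rewrite normr0.
rewrite sub0r normrN in y'_le.
have bb'_lt : `|b - b'| < 2 * t'.
  by apply: le_lt_trans (ler_distD bb b b') _; rewrite distrC; lra.
have : `|y'| < d.
  have := ler_wpM2l L_ge0 (ltW bb'_lt); nra.
rewrite lt_min => /andP[y'_r y'_ceps].
apply: le_trans (dist_solmap_le_norm ab_r bb'_r y'_r y'_ceps Gy') _.
by rewrite lee_fin ler_wpM2l // invr_ge0 ltW.
Qed.

Lemma solmap_liplike (L' : R) : L / c < L' -> liplike (solmap G) bb ab L'.
Proof.
move=> L_L'; have [t t_gt0 dist_le] := dist_solmap_le_param.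
have L'_gt0 : 0 < L' by apply: le_lt_trans L_L'; rewrite divr_ge0 // ltW.
split; first exact: ltW.
exists [set b | `|bb - b| < t], [set a | `|ab - a| < t].
split; first exact: nbhs_norm_lt.
split; first exact: nbhs_norm_lt.
move=> b b' bb_b bb_b' a Ga ab_a.
have [<-|b_neq] := eqVneq b b'.
  by exists a; rewrite // subrr normr0 mulr_ge0 // ltW.
have : (mf_dist a (solmap G b') < (L' * `|b - b'|)%:E)%E.
  apply: le_lt_trans (dist_le a b b' ab_a bb_b bb_b' Ga) _.
  by rewrite lte_fin mulrA ltr_pM2r ?normr_gt0 ?subr_eq0 // mulrC.
by move=> /ereal_inf_lt [_ [a' Sa' <-]]; rewrite lte_fin => /ltW; exists a'.
Qed.

Lemma dist_solmap_le : exists2 s : R, 0 < s & forall a b,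
  `|ab - a| < s -> `|bb - b| < s ->
  (mf_dist a (solmap G b) <= c^-1%:E * mf_dist (0%R : Y) (G a b))%E.
Proof.
set d := Order.min r (c * eps).
have d_gt0 : 0 < d by rewrite lt_min r_gt0 mulr_gt0.
have [s s_gt0 small_value] := innerG d_gt0.
exists (Order.min r s); first by rewrite lt_min r_gt0 s_gt0.
move=> a b; rewrite !lt_min => /andP[ab_a ab_a'] /andP[bb_b bb_b'].
apply: le_pmul_ereal_inf; first by rewrite invr_gt0.
move=> _ [y Gy <-]; rewrite sub0r normrN -EFinM.
have [y_d|d_y] := ltP `|y| d.
  move: (y_d); rewrite lt_min => /andP[y_r y_ceps].
  exact: dist_solmap_le_norm ab_a bb_b y_r y_ceps Gy.
(* A large value [y] is dominated by the small value inner semicontinuity provides. *)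
have [y0 Gy0 y0_d] := small_value _ _ ab_a' bb_b'.
move: (y0_d); rewrite lt_min => /andP[y0_r y0_ceps].
apply: le_trans (dist_solmap_le_norm ab_a bb_b y0_r y0_ceps Gy0) _.
have y0_y : `|y0| <= `|y| by rewrite ltW // (lt_le_trans y0_d d_y).
by rewrite lee_fin ler_wpM2l // invr_ge0 ltW.
Qed.

Lemma inv_solmap_metreg (L' : R) : L / c < L' -> metreg (inv_mf (solmap G)) ab bb L'.
Proof.
move=> L_L'; have L'_gt0 : 0 < L' by apply: le_lt_trans L_L'; rewrite divr_ge0 // ltW.
have [s1 s1_gt0 dist_le] := dist_solmap_le.
have [|s2 s2_gt0 residual_le] := dist0_le_param_dist (K := c * L').
  by rewrite mulrC -ltr_pdivrMr.
set s := Order.min s1 s2.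
split; first exact: ltW.
exists [set a | `|ab - a| < s], [set b | `|bb - b| < s].
split; first by apply: nbhs_norm_lt; rewrite lt_min s1_gt0.
split; first by apply: nbhs_norm_lt; rewrite lt_min s1_gt0.
move=> a b /=; rewrite !lt_min => /andP[ab_s1 ab_s2] /andP[bb_s1 bb_s2].
apply: le_pmul_ereal_inf => // _ [b' Gb' <-].
apply: le_trans (dist_le a b ab_s1 bb_s1) _.
apply: le_trans (lee_wpmul2l _ (residual_le a b b' ab_s2 bb_s2 Gb')) _.
  by rewrite lee_fin invr_ge0 ltW.
by rewrite -EFinM lee_fin !mulrA mulVf ?gt_eqF // mul1r.
Qed.

End SolutionMap.

Section Translations.
Variables (R : realType) (X Y P : normedModType R) (H : X -> P -> set Y).
Variables (xb : X) (pb : P).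

Lemma open_rate_p_swap (yb : Y) c :
  open_rate_p H xb pb yb c -> open_rate_x (fun p x => H x p) pb xb yb c.
Proof.
move=> [eps [eps_gt0 [U [V [W [nU [nV [nW openH]]]]]]]].
by exists eps; split => //; exists V, U, W; do 3 split => //; exact: openH.
Qed.

Lemma liplike_x_swap (yb : Y) L :
  liplike_x H xb pb yb L -> liplike_p (fun p x => H x p) pb xb yb L.
Proof.
move=> [L_ge0 [U [V [W [nU [nV [nW lipH]]]]]]].
by split => //; exists V, U, W; do 3 split => //; exact: lipH.
Qed.

Lemma open_rate_x_ball c : open_rate_x H xb pb 0 c ->
  exists eps r : R, [/\ 0 < eps, 0 < r & open_rate_ball H xb pb c eps r].
Proof.
move=> [eps [eps_gt0 [U [V [W [/near_norm_ball nU [/near_norm_ball nV]]]]]]].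
move=> [/near_norm_ball nW openH].
exists eps; near (0 : R)^'+ => r; exists r; split => //.
have Ur : forall x, `|xb - x| < r -> U x by near: r.
have Vr : forall p, `|pb - p| < r -> V p by near: r.
have Wr : forall y, `|0 - y| < r -> W y by near: r.
move=> rho x p y rho_gt0 rho_eps xb_x pb_p y_r Hy.
apply: openH => //; [exact: Vr | exact: Ur | by apply: Wr; rewrite sub0r normrN].
Unshelve. all: by end_near. Qed.

Lemma liplike_p_ball L : liplike_p H xb pb 0 L ->
  0 <= L /\ exists2 r : R, 0 < r & liplike_ball H xb pb L r.
Proof.
move=> [L_ge0 [U [V [W [/near_norm_ball nU [/near_norm_ball nV]]]]]].
move=> [/near_norm_ball nW lipH].
split => //; near (0 : R)^'+ => r; exists r => //.
have Ur : forall x, `|xb - x| < r -> U x by near: r.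
have Vr : forall p, `|pb - p| < r -> V p by near: r.
have Wr : forall y, `|0 - y| < r -> W y by near: r.
move=> p q x pb_p pb_q xb_x y Hy y_r.
apply: lipH => //; [exact: Vr | exact: Vr | exact: Ur | by apply: Wr; rewrite sub0r normrN].
Unshelve. all: by end_near. Qed.

Lemma inner_semicont_ball : inner_semicont H xb pb 0 -> inner_ball H xb pb.
Proof.
move=> innerH d d_gt0.
have [|UV [/nbhs_ballP [r r_gt0 rUV] UV_H]] := innerH (ball 0 d) (ball_open _ _).
  exact: ballxx.
exists r => // x p xb_x pb_p.
have [|y [Hy]] := UV_H x p; first by apply: rUV; split; rewrite -ball_normE.
by rewrite -ball_normE /ball_ /= sub0r normrN; exists y.
Qed.

End Translations.

Theorem theorem3p6 (R : realType) (X Y P : completeNormedModType R)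
  (H : X -> P -> set Y) (xb : X) (pb : P) :
  H xb pb 0 ->
  inner_semicont H xb pb 0 ->
  (forall c : R, 0 < c -> open_rate_x H xb pb 0 c ->
     (exists rb tb : R, 0 < rb /\ 0 < tb /\
        forall x p, mf_ball xb rb x -> mf_ball pb tb p ->
          (mf_dist x (solmap H p) <= c^-1%:E * mf_dist (0%R : Y) (H x p))%E)
     /\ ((exists L, liplike_p H xb pb 0 L) ->
          (exists L, liplike (solmap H) pb xb L) /\
          (lip (solmap H) pb xb <= c^-1%:E * lip_hat_p H xb pb 0%R)%E))
  /\
  (forall c : R, 0 < c -> open_rate_p H xb pb 0 c ->
     (exists rb tb : R, 0 < rb /\ 0 < tb /\
        forall x p, mf_ball xb rb x -> mf_ball pb tb p ->
          (mf_dist p (inv_mf (solmap H) x) <= c^-1%:E * mf_dist (0%R : Y) (H x p))%E)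
     /\ ((exists L, liplike_x H xb pb 0 L) ->
          (exists L, metreg (solmap H) pb xb L) /\
          (reg (solmap H) pb xb <= c^-1%:E * lip_hat_x H xb pb 0%R)%E)).
Proof.
move=> _ /inner_semicont_ball innerH; have innerHs := inner_ball_swap innerH.
split=> c c_gt0.
  move=> /open_rate_x_ball [eps [r [eps_gt0 r_gt0 openH]]].
  split.
    have [s s_gt0 dist_le] := dist_solmap_le innerH c_gt0 eps_gt0 r_gt0 openH.
    by exists s, s.
  have lip_solmap L : liplike_p H xb pb 0 L ->
      forall L' : R, L / c < L' -> liplike (solmap H) pb xb L'.
    move=> /liplike_p_ball [L_ge0 [rl rl_gt0 lipH]] L'.
    exact: (solmap_liplike L_ge0 rl_gt0 lipH c_gt0 eps_gt0 r_gt0 openH).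
  move=> [L lipH]; split; last exact: le_ereal_inf_EFin_scale lip_solmap.
  by exists (L / c + 1); apply: (lip_solmap _ lipH); rewrite ltrDl.
move=> /open_rate_p_swap /open_rate_x_ball [eps [r [eps_gt0 r_gt0 openH]]].
split.
  have [s s_gt0 dist_le] := dist_solmap_le innerHs c_gt0 eps_gt0 r_gt0 openH.
  by exists s, s; do 2 split => //; move=> x p xb_x pb_p; exact: dist_le.
have metreg_solmap L : liplike_x H xb pb 0 L ->
    forall L' : R, L / c < L' -> metreg (solmap H) pb xb L'.
  move=> /liplike_x_swap /liplike_p_ball [L_ge0 [rl rl_gt0 lipH]] L'.
  exact: (inv_solmap_metreg L_ge0 rl_gt0 lipH innerHs c_gt0 eps_gt0 r_gt0 openH).
move=> [L lipH]; split; last exact: le_ereal_inf_EFin_scale metreg_solmap.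
by exists (L / c + 1); apply: (metreg_solmap _ lipH); rewrite ltrDl.
Qed.
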